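(* Let $n\ge3$ and consider an ontological model in which, for each ontic state $\lambda$, there are response functions $\xi(\cdot|M_i,\lambda)$ on $\{0,1\}$ for binary measurements $M_1,\dots,M_n$ and $\xi(\cdot,\cdot|M_{i,i+1},\lambda)$ on $\{0,1\}^2$ for joint measurements $M_{i,i+1}$ ($i=1,\dots,n$, indices mod $n$), satisfying measurement noncontextuality in the form $\sum_{X_{i+1}}\xi(X_i,X_{i+1}|M_{i,i+1},\lambda)=\xi(X_i|M_i,\lambda)$ and $\sum_{X_i}\xi(X_i,X_{i+1}|M_{i,i+1},\lambda)=\xi(X_{i+1}|M_{i+1},\lambda)$ for all $i$ and all outcomes. Let $\eta(M_i,\lambda)=2\max_{X\in\{0,1\}}\xi(X|M_i,\lambda)-1$. Then for odd $n$, $$\xi(\mathrm{anti}|M_*,\lambda)\equiv\frac1n\sum_{i=1}^n\xi(X_i\ne X_{i+1}|M_{i,i+1},\lambda)\le1-\frac1{n^2}\sum_{i=1}^n\eta(M_i,\lambda),$$ and for even $n\ge4$, $$\xi(\mathrm{chained}|M_*,\lambda)\equiv\frac1n\sum_{i=1}^{n-1}\xi(X_i=X_{i+1}|M_{i,i+1},\lambda)+\frac1n\xi(X_n\ne X_1|M_{n1},\lambda)\le1-\frac1{n^2}\sum_{i=1}^n\eta(M_i,\lambda).$$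
   Context: Here $\xi(X_i\neq X_{i+1}|M_{i,i+1},\lambda)=\xi(0,1|M_{i,i+1},\lambda)+\xi(1,0|M_{i,i+1},\lambda)$ and $\xi(X_i=X_{i+1}|M_{i,i+1},\lambda)=\xi(0,0|M_{i,i+1},\lambda)+\xi(1,1|M_{i,i+1},\lambda)$; all response functions are probability distributions. The same bounds hold for any second family of joint measurements $M'_{i,i+1}$ with the same marginal conditions. *)

From mathcomp Require Import all_boot all_order all_algebra.
Set Implicit Arguments. Unset Strict Implicit. Unset Printing Implicit Defensive.
Import Order.TTheory GRing.Theory Num.Theory.
Local Open Scope ring_scope.

(* Indices are 0-based: measurement M_{i+1} of the paper is index i : 'I_n,
   and the successor (mod n) of i is [ordS i]. The joint measurement
   M_{i,i+1} is indexed by i, its outcome pair being (X_i, X_{i+1}). *)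

Definition is_distr1 (R : realFieldType) (p : bool -> R) : Prop :=
  (forall x, 0 <= p x) /\ \sum_(x : bool) p x = 1.

Definition is_distr2 (R : realFieldType) (p : bool -> bool -> R) : Prop :=
  (forall x y, 0 <= p x y) /\ \sum_(x : bool) \sum_(y : bool) p x y = 1.

Definition eta (R : realFieldType) (p : bool -> R) : R :=
  2 * Num.max (p false) (p true) - 1.

Definition p_neq (R : realFieldType) (p : bool -> bool -> R) : R :=
  p false true + p true false.
Definition p_eq (R : realFieldType) (p : bool -> bool -> R) : R :=
  p false false + p true true.

From mathcomp Require Import all_boot all_order all_algebra.
From mathcomp Require Import ring lra.
Import Order.TTheory GRing.Theory Num.Theory.
Local Open Scope ring_scope.
Set Implicit Arguments. Unset Strict Implicit.

(* Put b_i := xi(1|M_i) - xi(0|M_i), so that eta(M_i) = |b_i|.  By the marginal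
   conditions, xi(X_i <> X_(i+1)) <= 1 - |b_i + b_(i+1)| / 2 and
   xi(X_i = X_(i+1)) <= 1 - |b_i - b_(i+1)| / 2, i.e. each term of either
   average is at most 1 - |b_i + s_i b_(i+1)| / 2 for a sign s_i.  Both the
   odd anti-correlation and the even chained event are frustrated:
   prod_i (- s_i) = -1.  Then telescoping the products t_k b_k, with
   t_k := prod_(j<k) (- s_j), around the cycle gives
   2 |b_i| <= sum_j |b_j + s_j b_(j+1)| for every i; summing over i and
   dividing by n^2 gives the bound. *)

Section Bias.
Variable R : realFieldType.

Definition bias (p : bool -> R) : R := p true - p false.

Lemma eta_bias (p : bool -> R) : is_distr1 p -> eta p = `|bias p|.
Proof.
move=> [p_ge0 p_sum]; rewrite big_bool /= in p_sum; rewrite /eta /bias.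
have [le_ft|lt_tf] := leP (p false) (p true).
  by rewrite ger0_norm ?subr_ge0 //; lra.
by rewrite ler0_norm ?subr_le0 ?ltW //; lra.
Qed.

Section Joint.
Variables (q : bool -> bool -> R) (p1 p2 : bool -> R).
Hypothesis q_distr : is_distr2 q.
Hypothesis q_marg1 : forall x, \sum_(y : bool) q x y = p1 x.
Hypothesis q_marg2 : forall y, \sum_(x : bool) q x y = p2 y.

Lemma p_neq_le : p_neq q <= 1 - `|bias p1 + bias p2| / 2.
Proof.
have [q_ge0 q_sum] := q_distr; rewrite !big_bool /= in q_sum.
rewrite /bias -!q_marg1 -!q_marg2 !big_bool /=.
set d := (X in `|X|).
have : `|d| <= 2 - 2 * p_neq q.
  move: (q_ge0 false false) (q_ge0 true true) => q_ge0_1 q_ge0_2.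
  by rewrite ler_norml /d /p_neq; apply/andP; split; lra.
by rewrite /p_neq; lra.
Qed.

Lemma p_eq_le : p_eq q <= 1 - `|bias p1 - bias p2| / 2.
Proof.
have [q_ge0 q_sum] := q_distr; rewrite !big_bool /= in q_sum.
rewrite /bias -!q_marg1 -!q_marg2 !big_bool /=.
set d := (X in `|X|).
have : `|d| <= 2 - 2 * p_eq q.
  move: (q_ge0 false true) (q_ge0 true false) => q_ge0_1 q_ge0_2.
  by rewrite ler_norml /d /p_eq; apply/andP; split; lra.
by rewrite /p_eq; lra.
Qed.

End Joint.
End Bias.

Section Twist.
Variables (R : realFieldType) (S F : nat -> R).
Hypothesis S_unit : forall k, `|S k| = 1.

Definition twist (k : nat) : R := \prod_(0 <= j < k) - S j.

Lemma twist0 : twist 0 = 1.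
Proof. by rewrite /twist big_geq. Qed.

Lemma twistS k : twist k.+1 = - S k * twist k.
Proof. by rewrite /twist big_nat_recr //= mulrC. Qed.

Lemma norm_twist k : `|twist k| = 1.
Proof. by rewrite /twist normr_prod big1 // => j _; rewrite normrN S_unit. Qed.

Lemma twist_telescope m1 m2 : (m1 <= m2)%N ->
  `|twist m1 * F m1 - twist m2 * F m2|
    <= \sum_(m1 <= k < m2) `|F k + S k * F k.+1|.
Proof.
move=> /subnK <-; elim: (m2 - m1)%N => [|d IH]; first by rewrite big_geq ?subrr ?normr0.
rewrite addSn big_nat_recr ?leq_addl //=.
have -> : twist m1 * F m1 - twist (d + m1).+1 * F (d + m1).+1
    = (twist m1 * F m1 - twist (d + m1) * F (d + m1))
      + twist (d + m1) * (F (d + m1) + S (d + m1) * F (d + m1).+1).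
  by rewrite twistS; ring.
apply: le_trans (ler_normD _ _) _; apply: lerD => //.
by rewrite normrM norm_twist mul1r.
Qed.

(* Telescope from [0] to [i] and from [i] around to [n]: since the total twist
   is [-1], the two differences add up to [2 * twist i * F i]. *)
Lemma twisted_cycle_bound n i : F n = F 0 -> twist n = -1 -> (i <= n)%N ->
  2 * `|F i| <= \sum_(0 <= k < n) `|F k + S k * F k.+1|.
Proof.
move=> Fn twist_n le_in; rewrite (big_cat_nat (n := i)) //=.
have := @twist_telescope 0 i (leq0n i); have := @twist_telescope i n le_in.
rewrite twist0 twist_n Fn mul1r mulN1r opprK => bound_right bound_left.
have -> : 2 * `|F i| = `|(twist i * F i + F 0) - (F 0 - twist i * F i)|.
  rewrite (_ : _ - _ = 2 * (twist i * F i)); last by ring.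
  by rewrite !normrM norm_twist mul1r ger0_norm.
by apply: le_trans (ler_normB _ _) _; rewrite addrC lerD.
Qed.

End Twist.

Lemma cycle_bound (R : realFieldType) n (b s : 'I_n -> R) :
  (forall j, `|s j| = 1) -> \prod_(j < n) - s j = -1 ->
  forall i, 2 * `|b i| <= \sum_(j < n) `|b j + s j * b (ordS j)|.
Proof.
case: n b s => [b s _ _ []//|m b s s_unit prod_s i].
set F := fun k => b (inord k); set S := fun k => s (inord k).
have inord_out : inord m.+1 = ord0 :> 'I_m.+1.
  by rewrite /inord /insubd insubF ?ltnn.
have ordS_inord (j : 'I_m.+1) : ordS j = inord j.+1.
  apply: val_inj => /=; have [lt_jm|] := ltnP j.+1 m.+1.
    by rewrite modn_small ?inordK.
  rewrite ltnS => le_mj.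
  have j_m : (j : nat) = m by apply/anti_leq; rewrite le_mj andbT -ltnS ltn_ord.
  by rewrite j_m modnn inord_out.
have -> : \sum_(j < m.+1) `|b j + s j * b (ordS j)|
    = \sum_(0 <= k < m.+1) `|F k + S k * F k.+1|.
  by rewrite big_mkord; apply: eq_bigr => j _; rewrite /F /S inord_val ordS_inord.
have -> : b i = F i by rewrite /F inord_val.
apply: twisted_cycle_bound (ltnW (ltn_ord i)).
- by move=> k; apply: s_unit.
- by rewrite /F inord_out; congr b; apply: val_inj; rewrite /= inordK.
- by rewrite /twist big_mkord -prod_s; apply: eq_bigr => j _; rewrite /S inord_val.
Qed.

Lemma mean_le_of_cycle (R : realFieldType) n (b s : 'I_n -> R) (P : R) :
  (forall j, `|s j| = 1) -> \prod_(j < n) - s j = -1 ->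
  P <= \sum_(i < n) (1 - `|b i + s i * b (ordS i)| / 2) ->
  n%:R^-1 * P <= 1 - (n%:R ^+ 2)^-1 * \sum_(i < n) `|b i|.
Proof.
case: n b s => [b s _|n b s s_unit prod_s P_le]; first by rewrite big_ord0 => /eqP; lra.
have n_gt0 : 0 < n.+1%:R :> R by rewrite ltr0Sn.
set D := \sum_(j < n.+1) `|b j + s j * b (ordS j)|.
have {}P_le : P <= n.+1%:R - D / 2.
  by rewrite sumrB sumr_const card_ord -mulr_suml in P_le.
have sum_le : 2 * \sum_(i < n.+1) `|b i| <= n.+1%:R * D.
  rewrite mulr_sumr (_ : _ * D = \sum_(i < n.+1) D); last first.
    by rewrite sumr_const card_ord mulr_natl.
  by apply: ler_sum => i _; apply: cycle_bound.
rewrite -subr_ge0.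
have -> : 1 - (n.+1%:R ^+ 2)^-1 * \sum_(i < n.+1) `|b i| - n.+1%:R^-1 * P
    = (n.+1%:R ^+ 2 - \sum_(i < n.+1) `|b i| - n.+1%:R * P) / n.+1%:R ^+ 2.
  by field; rewrite addrC natr1 pnatr_eq0.
by apply: divr_ge0; [nra | rewrite exprn_ge0 ?ltW].
Qed.

Theorem mainTheorem11 (R : realFieldType) (n : nat) (hn : (3 <= n)%N)
  (xi1 : 'I_n -> bool -> R) (xi2 : 'I_n -> bool -> bool -> R)
  (hd1 : forall i, is_distr1 (xi1 i))
  (hd2 : forall i, is_distr2 (xi2 i))
  (hnc1 : forall i x, \sum_(y : bool) xi2 i x y = xi1 i x)
  (hnc2 : forall i y, \sum_(x : bool) xi2 i x y = xi1 (ordS i) y) :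
  (odd n ->
     n%:R^-1 * \sum_(i < n) p_neq (xi2 i)
       <= 1 - (n%:R ^+ 2)^-1 * \sum_(i < n) eta (xi1 i)) /\
  (~~ odd n ->
     n%:R^-1 * (\sum_(i < n | (i : nat) != n.-1) p_eq (xi2 i))
       + n%:R^-1 * (\sum_(i < n | (i : nat) == n.-1) p_neq (xi2 i))
       <= 1 - (n%:R ^+ 2)^-1 * \sum_(i < n) eta (xi1 i)).
Proof.
case: n hn xi1 xi2 hd1 hd2 hnc1 hnc2 => [//|m] _ xi1 xi2 hd1 hd2 hnc1 hnc2 /=.
have -> : \sum_(i < m.+1) eta (xi1 i) = \sum_(i < m.+1) `|bias (xi1 i)|.
  by apply: eq_bigr => i _; apply: eta_bias.
split => [n_odd | n_even].
  apply: (@mean_le_of_cycle _ _ _ (fun=> 1)) => [_||]; first exact: normr1.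
    by rewrite prodr_const card_ord -signr_odd /= n_odd.
  by apply: ler_sum => i _; rewrite mul1r; apply: p_neq_le.
rewrite -mulrDr.
apply: (@mean_le_of_cycle _ _ _ (fun i => if (i : nat) == m then 1 else -1)).
- by move=> i; case: ifP; rewrite ?normrN normr1.
- rewrite big_ord_recr /= eqxx big1 ?mul1r // => j _.
  by rewrite ltn_eqF ?opprK.
- rewrite [X in _ <= X](bigID (fun i : 'I_m.+1 => (i : nat) == m)) [X in X <= _]addrC /=.
  apply: lerD; apply: ler_sum => i.
    by move=> ->; rewrite mul1r; apply: p_neq_le.
  by move=> /negbTE ->; rewrite mulN1r; apply: p_eq_le.
Qed.
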